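(* Let $s>1/2$ and $0\le\varepsilon<1$, and fix a constant $c_0>0$. For a real-valued mean-zero function $\phi$ on $\mathbb{T}$ (possibly depending on $t$) define the multilinear expressions \[ \widehat{B_1}(\phi)(n)=\sum_{\substack{n=n_1+n_2\\ n_1,n_2\neq n}}\frac{n(n_1^2+n_2^2)}{\Phi_2(n_1,n_2)}\widehat\phi(n_1)\widehat\phi(n_2), \] \[ \widehat{B_2}(\phi)(n)=\sum_{\substack{n=n_1+n_2+n_3\\ |\Phi_3(n_1,n_2,n_3)|\ge c_0\max_i|n_i|^4\\ n_1,n_2,n_3\neq n}}\frac{n(n_1^2+(n_2+n_3)^2)(n_2+n_3)(n_2^2+n_3^2)}{\Phi_2(n_1,n_2+n_3)\,\Phi_3(n_1,n_2,n_3)}\widehat\phi(n_1)\widehat\phi(n_2)\widehat\phi(n_3), \] where all frequencies $n,n_j$ range over $\mathbb{Z}\setminus\{0\}$ (and terms with $n_2+n_3=0$ in $B_2$ are omitted). Then for every such $\tilde u$, \[ \|B_1(\tilde u)+B_2(\tilde u)\|_{C^0_tH^{s+\varepsilon}_x}\lesssim\|\tilde u\|_{C^0_tH^s_x}^2+\|\tilde u\|_{C^0_tH^s_x}^3. \]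
   Context: $\Phi_2(n_1,n_2)=(n_1+n_2)^5-n_1^5-n_2^5$ and $\Phi_3(n_1,n_2,n_3)=(n_1+n_2+n_3)^5-n_1^5-n_2^5-n_3^5$. Factors of $2\pi$ are ignored. The implicit constant may depend on $s,\varepsilon,c_0$. *)

From Stdlib Require Import Reals ZArith List Bool.
Open Scope bool_scope.
From Coquelicot Require Import Coquelicot.
Import ListNotations.
Open Scope R_scope.

(** Fourier coefficient sequences on the torus (factors of 2*pi ignored). *)
Definition coeffs := Z -> C.

Definition real_meanzero (a : coeffs) : Prop :=
  a 0%Z = RtoC 0 /\ forall n : Z, a (- n)%Z = Cconj (a n).

Definition Phi2 (n1 n2 : Z) : Z := ((n1 + n2) ^ 5 - n1 ^ 5 - n2 ^ 5)%Z.
Definition Phi3 (n1 n2 n3 : Z) : Z :=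
  ((n1 + n2 + n3) ^ 5 - n1 ^ 5 - n2 ^ 5 - n3 ^ 5)%Z.

Definition zrange (N : nat) : list Z :=
  map (fun k => (Z.of_nat k - Z.of_nat N)%Z) (seq 0 (2 * N + 1)).

Definition zsumC (N : nat) (f : Z -> C) : C :=
  fold_right Cplus (RtoC 0) (map f (zrange N)).
Definition zsumR (N : nat) (f : Z -> R) : R :=
  fold_right Rplus 0 (map f (zrange N)).

Definition limC (S : nat -> C) : C :=
  (real (Lim_seq (fun N => fst (S N))), real (Lim_seq (fun N => snd (S N)))).

Definition Hs_sq (s : R) (a : coeffs) : Rbar :=
  Lim_seq (fun N => zsumR N (fun n => Rpower (1 + IZR n ^ 2) s * (Cmod (a n)) ^ 2)).

Definition Zneqb (a b : Z) : bool := negb (Z.eqb a b).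

Definition B1_term (a : coeffs) (n n1 : Z) : C :=
  let n2 := (n - n1)%Z in
  if Zneqb n1 0 && Zneqb n2 0 && Zneqb n1 n && Zneqb n2 n then
    RtoC (IZR (n * (n1 ^ 2 + n2 ^ 2)) / IZR (Phi2 n1 n2)) * a n1 * a n2
  else RtoC 0.

Definition B1hat (a : coeffs) : coeffs := fun n =>
  if Z.eqb n 0 then RtoC 0 else limC (fun N => zsumC N (B1_term a n)).

Definition B2_term (c0 : R) (a : coeffs) (n n1 n2 : Z) : C :=
  let n3 := (n - n1 - n2)%Z in
  let m := (n2 + n3)%Z in
  if Zneqb n1 0 && Zneqb n2 0 && Zneqb n3 0
     && Zneqb n1 n && Zneqb n2 n && Zneqb n3 n && Zneqb m 0
     && (if Rle_dec (c0 * IZR (Z.max (Z.abs n1) (Z.max (Z.abs n2) (Z.abs n3))) ^ 4)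
                 (IZR (Z.abs (Phi3 n1 n2 n3))) then true else false)
  then
    RtoC (IZR (n * (n1 ^ 2 + m ^ 2) * m * (n2 ^ 2 + n3 ^ 2))
          / (IZR (Phi2 n1 m) * IZR (Phi3 n1 n2 n3)))
      * a n1 * a n2 * a n3
  else RtoC 0.

Definition B2hat (c0 : R) (a : coeffs) : coeffs := fun n =>
  if Z.eqb n 0 then RtoC 0
  else limC (fun N => zsumC N (fun n1 => zsumC N (fun n2 => B2_term c0 a n n1 n2))).

Definition continuous_Hs (s : R) (I : R -> Prop) (u : R -> coeffs) : Prop :=
  forall t, I t -> forall eps, 0 < eps -> exists delta, 0 < delta /\
    forall t', I t' -> Rabs (t' - t) < delta ->
      Rbar_lt (Hs_sq s (fun n => u t' n - u t n)%C) (Finite (eps ^ 2)).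

(* Both multipliers gain one derivative on every input.  Since
   Phi2(n1,n2) = 5 n1 n2 (n1+n2) (n1^2 + n1 n2 + n2^2), the B1 multiplier times |n1 n2| is at
   most 1, and where |Phi3| >= c0 max|ni|^4 the B2 multiplier times |n1 n2 n3| is at most 1/c0.
   Distributing <n>^(s+eps) <= 3^(s+eps) sum_i <ni>^(s+eps) and using <k>^(s+eps) <= 2|k| <k>^s
   (as eps < 1), every term is dominated by a convolution of the l^2 sequence <k>^s |u(k)| with
   copies of |u(k)|/|k|, which is in l^1 by Cauchy-Schwarz against sum 1/k^2.  Young's inequality
   l^2 * l^1 -> l^2 bounds the truncated sums of absolute values defining B1 and B2, and monotone
   convergence passes the bound to B1 and B2. *)

From Stdlib Require Import Reals ZArith List FinFun Lia Lra Psatz Bool.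
From Coquelicot Require Import Coquelicot.
Import ListNotations.
Open Scope R_scope.

(** * Finite sums *)

Definition lsum {X : Type} (l : list X) (f : X -> R) : R := fold_right Rplus 0 (map f l).

Lemma lsum_nil {X} (f : X -> R) : lsum [] f = 0.
Proof. reflexivity. Qed.

Lemma lsum_cons {X} (x : X) l f : lsum (x :: l) f = f x + lsum l f.
Proof. reflexivity. Qed.

Lemma lsum_map {X Y} (g : X -> Y) l (f : Y -> R) : lsum (map g l) f = lsum l (fun x => f (g x)).
Proof. unfold lsum. now rewrite map_map. Qed.

Lemma lsum_ext {X} l (f g : X -> R) : (forall x, In x l -> f x = g x) -> lsum l f = lsum l g.
Proof.
  induction l as [|x l IH]; intros H; [reflexivity|].
  rewrite !lsum_cons, H by (simpl; auto).
  f_equal. apply IH. intros y Hy. apply H. now right.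
Qed.

Lemma lsum_le {X} l (f g : X -> R) : (forall x, In x l -> f x <= g x) -> lsum l f <= lsum l g.
Proof.
  induction l as [|x l IH]; intros H; [apply Rle_refl|].
  rewrite !lsum_cons. apply Rplus_le_compat;
    [apply H; now left | apply IH; intros y Hy; apply H; now right].
Qed.

Lemma lsum_nonneg {X} l (f : X -> R) : (forall x, In x l -> 0 <= f x) -> 0 <= lsum l f.
Proof.
  induction l as [|x l IH]; intros H; [apply Rle_refl|].
  rewrite lsum_cons. apply Rplus_le_le_0_compat;
    [apply H; now left | apply IH; intros y Hy; apply H; now right].
Qed.

Lemma lsum_zero {X} (l : list X) : lsum l (fun _ => 0) = 0.
Proof. induction l as [|x l IH]; [reflexivity|]. rewrite lsum_cons, IH. ring. Qed.

Lemma lsum_plus {X} l (f g : X -> R) : lsum l (fun x => f x + g x) = lsum l f + lsum l g.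
Proof. induction l as [|x l IH]; [rewrite !lsum_nil; ring|]. rewrite !lsum_cons, IH. ring. Qed.

Lemma lsum_scal {X} l c (f : X -> R) : lsum l (fun x => c * f x) = c * lsum l f.
Proof. induction l as [|x l IH]; [rewrite !lsum_nil; ring|]. rewrite !lsum_cons, IH. ring. Qed.

Lemma lsum_app {X} (l1 l2 : list X) f : lsum (l1 ++ l2) f = lsum l1 f + lsum l2 f.
Proof.
  induction l1 as [|x l1 IH]; simpl app; rewrite ?lsum_nil, ?lsum_cons, ?IH; ring.
Qed.

Lemma lsum_scal_r {X} l c (f : X -> R) : lsum l (fun x => f x * c) = lsum l f * c.
Proof. induction l as [|x l IH]; [rewrite !lsum_nil; ring|]. rewrite !lsum_cons, IH. ring. Qed.

Lemma lsum_comm {X Y} (l1 : list X) (l2 : list Y) (h : X -> Y -> R) :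
  lsum l1 (fun x => lsum l2 (h x)) = lsum l2 (fun y => lsum l1 (fun x => h x y)).
Proof.
  induction l1 as [|x l1 IH]; [now rewrite lsum_zero|].
  rewrite lsum_cons, IH, <- lsum_plus. reflexivity.
Qed.

Section Inclusion.

Variables (X : Type) (eq_dec : forall x y : X, {x = y} + {x <> y}).

Lemma lsum_remove_le (l : list X) (f : X -> R) x :
  (forall y, In y l -> 0 <= f y) -> lsum (remove eq_dec x l) f <= lsum l f.
Proof.
  induction l as [|y l IH]; intros H; [apply Rle_refl|]. simpl remove.
  assert (Hy := H y (or_introl eq_refl)).
  assert (Hl := IH (fun z Hz => H z (or_intror Hz))).
  destruct (eq_dec x y); rewrite ?lsum_cons; lra.
Qed.

Lemma lsum_remove_In (l : list X) (f : X -> R) x : (forall y, In y l -> 0 <= f y) -> In x l ->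
  f x + lsum (remove eq_dec x l) f <= lsum l f.
Proof.
  induction l as [|y l IH]; intros H Hx; [destruct Hx|]. simpl remove.
  assert (Hl : forall z, In z l -> 0 <= f z) by (intros z Hz; apply H; now right).
  destruct (eq_dec x y) as [<-|Hxy]; rewrite ?lsum_cons.
  - pose proof (lsum_remove_le l f x Hl). lra.
  - destruct Hx as [->|Hx]; [congruence|]. pose proof (IH Hl Hx). lra.
Qed.

Lemma lsum_incl (l l' : list X) (f : X -> R) : NoDup l -> incl l l' ->
  (forall y, In y l' -> 0 <= f y) -> lsum l f <= lsum l' f.
Proof.
  revert l'. induction l as [|x l IH]; intros l' Hn Hi H.
  - now apply lsum_nonneg.
  - inversion_clear Hn as [|? ? Hx Hn']. rewrite lsum_cons.
    assert (Hrem : lsum l f <= lsum (remove eq_dec x l') f).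
    { apply IH; auto.
      - intros y Hy. apply in_in_remove; [intros ->; contradiction | apply Hi; now right].
      - intros y Hy. apply H. eapply in_remove; eauto. }
    pose proof (lsum_remove_In l' f x H (Hi x (or_introl eq_refl))). lra.
Qed.

End Inclusion.

Lemma zrange_In N k : In k (zrange N) <-> (Z.abs k <= Z.of_nat N)%Z.
Proof.
  unfold zrange. rewrite in_map_iff. split.
  - intros [j [<- Hj]]. apply in_seq in Hj. lia.
  - intros H. exists (Z.to_nat (k + Z.of_nat N)). split; [lia | apply in_seq; lia].
Qed.

Lemma zrange_NoDup N : NoDup (zrange N).
Proof. apply Injective_map_NoDup; [intros x y; lia | apply seq_NoDup]. Qed.

Lemma lsum_zrange_mono N N' f : (N <= N')%nat -> (forall k, 0 <= f k) ->
  lsum (zrange N) f <= lsum (zrange N') f.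
Proof.
  intros HN Hf. apply (lsum_incl _ Z.eq_dec); auto using zrange_NoDup.
  intros k. rewrite !zrange_In. lia.
Qed.

Lemma lsum_zrange_S N f :
  lsum (zrange (S N)) f = f (- Z.of_nat (S N))%Z + lsum (zrange N) f + f (Z.of_nat (S N)).
Proof.
  unfold zrange. replace (2 * S N + 1)%nat with (S (S (2 * N + 1))) by lia.
  rewrite seq_S, <- cons_seq, <- seq_shift, !map_app, !map_cons, map_map.
  rewrite lsum_app, !lsum_cons, !lsum_map.
  rewrite (lsum_ext _ (fun x => f (Z.of_nat (S x) - Z.of_nat (S N))%Z)
                      (fun x => f (Z.of_nat x - Z.of_nat N)%Z)) by (intros; f_equal; lia).
  replace (Z.of_nat 0 - Z.of_nat (S N))%Z with (- Z.of_nat (S N))%Z by lia.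
  replace (Z.of_nat (0 + S (2 * N + 1)) - Z.of_nat (S N))%Z with (Z.of_nat (S N)) by lia.
  rewrite lsum_nil. ring.
Qed.

(** * Young's inequality on Z *)

(* Norms are bounded through all finite index sets (for g >= 0, [l1_le g B] is |g|_1 <= B);
   in this form they are stable under injective reindexing. *)
Definition l1_le (g : Z -> R) (B : R) : Prop := forall l, NoDup l -> lsum l g <= B.

Definition l2sq_le (f : Z -> R) (A : R) : Prop := l1_le (fun k => f k ^ 2) A.

Lemma l1_le_of_zrange g B : (forall k, 0 <= g k) ->
  (forall N, lsum (zrange N) g <= B) -> l1_le g B.
Proof.
  intros Hg HB l Hl.
  assert (HN : exists N, forall k, In k l -> (Z.abs k <= Z.of_nat N)%Z).
  { clear. induction l as [|x l [N HN]]; [now exists O|].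
    exists (Nat.max N (Z.to_nat (Z.abs x))). intros k [<-|Hk]; [|specialize (HN k Hk)]; lia. }
  destruct HN as [N HN].
  apply Rle_trans with (lsum (zrange N) g); [|apply HB].
  apply (lsum_incl _ Z.eq_dec); auto. intros k Hk. apply zrange_In. auto.
Qed.

Lemma l1_le_nonneg g B : l1_le g B -> 0 <= B.
Proof. intros H. apply (H []). constructor. Qed.

Lemma l1_le_comp_inj g B (h : Z -> Z) : Injective h -> l1_le g B -> l1_le (fun k => g (h k)) B.
Proof. intros Hh H l Hl. rewrite <- lsum_map. apply H, Injective_map_NoDup; auto. Qed.

Lemma l2sq_le_mono f g A : (forall n, 0 <= f n <= g n) -> l2sq_le g A -> l2sq_le f A.
Proof.
  intros Hfg H l Hl. eapply Rle_trans; [|apply (H l Hl)].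
  apply lsum_le. intros n _. specialize (Hfg n). apply pow_incr. lra.
Qed.

Lemma l2sq_le_weaken f A A' : A <= A' -> l2sq_le f A -> l2sq_le f A'.
Proof. intros HA H l Hl. specialize (H l Hl). lra. Qed.

Lemma l2sq_le_scal f A c : l2sq_le f A -> l2sq_le (fun n => c * f n) (c ^ 2 * A).
Proof.
  intros H l Hl. rewrite (lsum_ext _ _ (fun n => c ^ 2 * f n ^ 2)) by (intros; ring).
  rewrite lsum_scal. apply Rmult_le_compat_l; [apply pow2_ge_0 | apply H, Hl].
Qed.

Lemma l2sq_le_plus f g A B : l2sq_le f A -> l2sq_le g B ->
  l2sq_le (fun n => f n + g n) (2 * (A + B)).
Proof.
  intros Hf Hg l Hl. specialize (Hf l Hl). specialize (Hg l Hl).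
  apply Rle_trans with (lsum l (fun n => 2 * (f n ^ 2 + g n ^ 2))).
  - apply lsum_le. intros n _. pose proof (pow2_ge_0 (f n - g n)). nra.
  - rewrite lsum_scal, lsum_plus. lra.
Qed.

(* Lagrange's identity: the double sum of (f p g q - f q g p)^2 is 2 (|f|^2 |g|^2 - <f,g>^2). *)
Lemma lsum_Cauchy_Schwarz {X} l (f g : X -> R) :
  lsum l (fun x => f x * g x) ^ 2 <= lsum l (fun x => f x ^ 2) * lsum l (fun x => g x ^ 2).
Proof.
  set (Sf := lsum l (fun x => f x ^ 2)). set (Sg := lsum l (fun x => g x ^ 2)).
  set (Sfg := lsum l (fun x => f x * g x)).
  assert (Hrow : forall p, lsum l (fun q => (f p * g q - f q * g p) ^ 2)
                   = f p ^ 2 * Sg + g p ^ 2 * Sf + (-2 * (f p * g p)) * Sfg).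
  { intros p. rewrite (lsum_ext _ _ (fun q => f p ^ 2 * g q ^ 2 + g p ^ 2 * f q ^ 2
                                             + (-2 * (f p * g p)) * (f q * g q))) by (intros; ring).
    now rewrite !lsum_plus, !lsum_scal. }
  assert (Hlag : 0 <= lsum l (fun p => f p ^ 2 * Sg + g p ^ 2 * Sf + (-2 * (f p * g p)) * Sfg)).
  { rewrite <- (lsum_ext _ _ _ (fun p _ => Hrow p)).
    apply lsum_nonneg. intros p _. apply lsum_nonneg. intros. apply pow2_ge_0. }
  rewrite !lsum_plus in Hlag.
  rewrite !lsum_scal_r, lsum_scal in Hlag. fold Sf Sg Sfg in Hlag. nra.
Qed.

Lemma lsum_Cauchy_Schwarz_weighted {X} l (h w : X -> R) : (forall x, 0 <= w x) ->
  lsum l (fun x => h x * w x) ^ 2 <= lsum l w * lsum l (fun x => h x ^ 2 * w x).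
Proof.
  intros Hw.
  assert (Hsq : forall x, sqrt (w x) * sqrt (w x) = w x) by (intros; apply sqrt_sqrt, Hw).
  pose proof (lsum_Cauchy_Schwarz l (fun x => sqrt (w x)) (fun x => h x * sqrt (w x))) as H.
  rewrite (lsum_ext _ (fun x => sqrt (w x) * (h x * sqrt (w x))) (fun x => h x * w x)),
    (lsum_ext _ (fun x => sqrt (w x) ^ 2) w),
    (lsum_ext _ (fun x => (h x * sqrt (w x)) ^ 2) (fun x => h x ^ 2 * w x)) in H; auto.
  all: intros x _; set (r := sqrt (w x)); rewrite <- (Hsq x); fold r; ring.
Qed.

Lemma lsum_sq_weighted_le {X} (P : list X) (l : list Z) (h w : Z -> X -> R) B :
  (forall n p, 0 <= w n p) -> (forall n, lsum P (w n) <= B) ->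
  lsum l (fun n => lsum P (fun p => h n p * w n p) ^ 2)
    <= B * lsum l (fun n => lsum P (fun p => h n p ^ 2 * w n p)).
Proof.
  intros Hw HB. rewrite <- lsum_scal. apply lsum_le. intros n _.
  eapply Rle_trans; [apply lsum_Cauchy_Schwarz_weighted, Hw|].
  apply Rmult_le_compat_r; [|apply HB].
  apply lsum_nonneg. intros p _. apply Rmult_le_pos; [apply pow2_ge_0 | apply Hw].
Qed.

Definition conv (L : nat) (f g : Z -> R) (n : Z) : R := lsum (zrange L) (fun k => f k * g (n - k)%Z).

Lemma l2sq_le_conv_l L f g A B : (forall k, 0 <= g k) -> l2sq_le f A -> l1_le g B ->
  l2sq_le (conv L f g) (A * B ^ 2).
Proof.
  intros Hg Hf HgB l Hl. unfold conv.
  assert (HB := l1_le_nonneg _ _ HgB).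
  assert (Hshift : forall k, lsum l (fun n => g (n - k)%Z) <= B)
    by (intros k; apply (l1_le_comp_inj g B (fun n => n - k)%Z); auto; intros x y; lia).
  eapply Rle_trans.
  { apply (lsum_sq_weighted_le _ l (fun n k => f k) (fun n k => g (n - k)%Z) B); [intros; apply Hg|].
    intros n. apply (l1_le_comp_inj g B (fun k => n - k)%Z); auto using zrange_NoDup. intros x y; lia. }
  rewrite lsum_comm, (lsum_ext _ _ (fun k => f k ^ 2 * lsum l (fun n => g (n - k)%Z)))
    by (intros; apply lsum_scal).
  replace (A * B ^ 2) with (B * (A * B)) by ring. apply Rmult_le_compat_l; [exact HB|].
  apply Rle_trans with (lsum (zrange L) (fun k => f k ^ 2) * B).
  - rewrite <- lsum_scal_r. apply lsum_le. intros k _.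
    apply Rmult_le_compat_l; [apply pow2_ge_0 | apply Hshift].
  - apply Rmult_le_compat_r; [exact HB | apply Hf, zrange_NoDup].
Qed.

Lemma l2sq_le_conv_r L f g A B : (forall k, 0 <= g k) -> l2sq_le f A -> l1_le g B ->
  l2sq_le (conv L g f) (A * B ^ 2).
Proof.
  intros Hg Hf HgB l Hl.
  assert (HB := l1_le_nonneg _ _ HgB).
  rewrite (lsum_ext _ _ (fun n => lsum (zrange L) (fun k => f (n - k)%Z * g k) ^ 2))
    by (intros n _; unfold conv; f_equal; apply lsum_ext; intros; ring).
  assert (Hshift : forall k, lsum l (fun n => f (n - k)%Z ^ 2) <= A)
    by (intros k; apply (l1_le_comp_inj (fun n => f n ^ 2) A (fun n => n - k)%Z); auto; intros x y; lia).
  eapply Rle_trans.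
  { apply (lsum_sq_weighted_le _ l (fun n k => f (n - k)%Z) (fun n k => g k) B); [intros; apply Hg|].
    intros n. apply HgB, zrange_NoDup. }
  rewrite lsum_comm, (lsum_ext _ _ (fun k => lsum l (fun n => f (n - k)%Z ^ 2) * g k))
    by (intros; apply lsum_scal_r).
  replace (A * B ^ 2) with (B * (A * B)) by ring. apply Rmult_le_compat_l; [exact HB|].
  apply Rle_trans with (A * lsum (zrange L) g).
  - rewrite <- lsum_scal. apply lsum_le. intros k _.
    apply Rmult_le_compat_r; [apply Hg | apply Hshift].
  - apply Rmult_le_compat_l; [eapply l1_le_nonneg, Hf | apply HgB, zrange_NoDup].
Qed.

(** * Passing to the limit in the truncations *)

Lemma is_lim_seq_lsum {X} l (u : X -> nat -> R) (v : X -> R) :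
  (forall x, In x l -> is_lim_seq (u x) (v x)) ->
  is_lim_seq (fun L => lsum l (fun x => u x L)) (lsum l v).
Proof.
  induction l as [|x l IH]; intros H; [apply is_lim_seq_const|].
  apply is_lim_seq_plus'; [apply H; now left | apply IH; intros y Hy; apply H; now right].
Qed.

Lemma l2sq_le_Lim_seq (T : Z -> nat -> R) A :
  (forall n L, T n L <= T n (S L)) -> (forall L, l2sq_le (fun n => T n L) A) ->
  (forall n L, T n L <= real (Lim_seq (T n))) /\ l2sq_le (fun n => real (Lim_seq (T n))) A.
Proof.
  intros Hinc HA.
  assert (Hbnd : forall n L, T n L <= 1 + A).
  { intros n L. assert (Hsq := HA L [n] (NoDup_cons _ (in_nil (a := n)) (NoDup_nil _))).
    rewrite lsum_cons, lsum_nil in Hsq. nra. }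
  assert (Hlim : forall n, is_lim_seq (T n) (real (Lim_seq (T n)))).
  { intros n. destruct (ex_finite_lim_seq_incr _ _ (Hinc n) (Hbnd n)) as [x Hx].
    now rewrite (is_lim_seq_unique _ _ Hx). }
  split.
  - intros n. apply is_lim_seq_incr_compare; auto.
  - intros l Hl.
    assert (Hsum : is_lim_seq (fun L => lsum l (fun n => T n L ^ 2))
                     (lsum l (fun n => real (Lim_seq (T n)) ^ 2))).
    { apply is_lim_seq_lsum. intros n _. simpl.
      apply is_lim_seq_mult'; [|apply is_lim_seq_mult'; [|apply is_lim_seq_const]]; apply Hlim. }
    exact (is_lim_seq_le _ _ _ _ (fun L => HA L l Hl) Hsum (is_lim_seq_const A)).
Qed.

Lemma Rabs_real_Lim_seq_le (u : nat -> R) X :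
  (forall L, Rabs (u L) <= X) -> Rabs (real (Lim_seq u)) <= X.
Proof.
  intros H.
  assert (Hu : Rbar_le (Lim_seq u) X /\ Rbar_le (- X) (Lim_seq u)).
  { rewrite <- (Lim_seq_const X), <- (Lim_seq_const (- X)).
    split; apply Lim_seq_le_loc; exists O; intros L _; specialize (H L);
      apply Rabs_le_between in H; lra. }
  destruct Hu as [Hup Hlo]. apply Rabs_le_between.
  destruct (Lim_seq u); simpl in *; try contradiction; lra.
Qed.

Lemma Cmod_limC_le (S : nat -> C) X : (forall L, Cmod (S L) <= X) -> Cmod (limC S) <= 2 * X.
Proof.
  intros H.
  assert (Hpart : forall p : C -> R, (forall z, Rabs (p z) <= Cmod z) ->
                    Rabs (real (Lim_seq (fun L => p (S L)))) <= X).
  { intros p Hp. apply Rabs_real_Lim_seq_le. intros L. eapply Rle_trans; [apply Hp | apply H]. }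
  assert (Hfst := Hpart fst (fun z => Rle_trans _ _ _ (Rmax_l _ _) (Rmax_Cmod z))).
  assert (Hsnd := Hpart snd (fun z => Rle_trans _ _ _ (Rmax_r _ _) (Rmax_Cmod z))).
  assert (Hsqrt2 : sqrt 2 <= 2).
  { rewrite <- (sqrt_square 2) at 2 by lra. apply sqrt_le_1_alt. lra. }
  assert (HX : 0 <= X) by (eapply Rle_trans; [apply Cmod_ge_0 | apply (H O)]).
  eapply Rle_trans; [apply Cmod_2Rmax|]. unfold limC; simpl fst; simpl snd.
  apply Rmult_le_compat; auto using sqrt_pos.
  - eapply Rle_trans; [apply Rabs_pos | apply Rmax_l].
  - now apply Rmax_lub.
Qed.

(** * Sobolev weights *)

Definition bracket (r : R) (k : Z) : R := Rpower (1 + IZR k ^ 2) (r / 2).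

Lemma bracket_pos r k : 0 < bracket r k.
Proof. apply exp_pos. Qed.

Lemma bracket_ge_1 r k : 0 <= r -> 1 <= bracket r k.
Proof.
  intros Hr. unfold bracket. rewrite <- (Rpower_O (1 + IZR k ^ 2)) at 1 by nra.
  apply Rle_Rpower; [pose proof (pow2_ge_0 (IZR k)) |]; lra.
Qed.

Lemma bracket_sq r k : bracket r k ^ 2 = Rpower (1 + IZR k ^ 2) r.
Proof. unfold bracket. rewrite <- Rpower_pow, Rpower_mult by apply exp_pos. simpl. f_equal. field. Qed.

Lemma Rpower_Rmax_le x y e : Rpower (Rmax x y) e <= Rpower x e + Rpower y e.
Proof.
  pose proof (exp_pos (e * ln x)). pose proof (exp_pos (e * ln y)).
  apply Rmax_case; unfold Rpower; lra.
Qed.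

Lemma Rpower_le_9_Rmax e b b1 b2 : 0 <= e -> 0 < b -> 0 < b1 -> 0 < b2 ->
  b <= 9 * Rmax b1 b2 -> Rpower b e <= Rpower 9 e * (Rpower b1 e + Rpower b2 e).
Proof.
  intros He Hb Hb1 Hb2 H.
  assert (Hmax : 0 < Rmax b1 b2) by (eapply Rlt_le_trans; [apply Hb1 | apply Rmax_l]).
  eapply Rle_trans; [apply Rle_Rpower_l; [exact He | split; [exact Hb | exact H]]|].
  rewrite <- Rpower_mult_distr by lra.
  apply Rmult_le_compat_l; [left; apply exp_pos | apply Rpower_Rmax_le].
Qed.

Lemma bracket_add r n n1 n2 : 0 <= r -> n = (n1 + n2)%Z ->
  bracket r n <= Rpower 9 (r / 2) * (bracket r n1 + bracket r n2).
Proof.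
  intros Hr ->. unfold bracket. rewrite plus_IZR.
  pose proof (pow2_ge_0 (IZR n1)). pose proof (pow2_ge_0 (IZR n2)).
  pose proof (pow2_ge_0 (IZR n1 + IZR n2)). pose proof (pow2_ge_0 (IZR n1 - IZR n2)).
  apply Rpower_le_9_Rmax; try lra. apply Rmax_case_strong; intros; nra.
Qed.

Lemma bracket_add3 r n n1 n2 n3 : 0 <= r -> n = (n1 + n2 + n3)%Z ->
  bracket r n <= Rpower 9 (r / 2) * (bracket r n1 + bracket r n2 + bracket r n3).
Proof.
  intros Hr ->. unfold bracket. rewrite !plus_IZR.
  set (x := IZR n1). set (y := IZR n2). set (z := IZR n3).
  pose proof (pow2_ge_0 x). pose proof (pow2_ge_0 y). pose proof (pow2_ge_0 z).
  pose proof (pow2_ge_0 (x + y + z)).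
  pose proof (pow2_ge_0 (x - y)). pose proof (pow2_ge_0 (x - z)). pose proof (pow2_ge_0 (y - z)).
  assert (Hyz : 0 < Rmax (1 + y ^ 2) (1 + z ^ 2)) by (apply Rmax_case; lra).
  eapply Rle_trans.
  { apply (Rpower_le_9_Rmax _ _ (1 + x ^ 2) (Rmax (1 + y ^ 2) (1 + z ^ 2))); try lra.
    repeat apply Rmax_case_strong; intros; nra. }
  rewrite Rplus_assoc. apply Rmult_le_compat_l; [left; apply exp_pos|].
  apply Rplus_le_compat_l, Rpower_Rmax_le.
Qed.

Lemma bracket_le_abs_mul r s k : r <= s + 1 -> k <> 0%Z ->
  bracket r k <= 2 * Rabs (IZR k) * bracket s k.
Proof.
  intros Hr Hk. unfold bracket. set (b := 1 + IZR k ^ 2).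
  assert (Hk1 : 1 <= Rabs (IZR k)) by (rewrite <- abs_IZR; apply IZR_le; lia).
  assert (Hb : 1 <= b) by (pose proof (pow2_ge_0 (IZR k)); unfold b; lra).
  eapply Rle_trans; [apply (Rle_Rpower b (r / 2) (s / 2 + / 2)); lra|].
  rewrite Rpower_plus, Rpower_sqrt by lra.
  assert (Hsqrt : sqrt b <= 2 * Rabs (IZR k)).
  { rewrite <- (sqrt_pow2 (2 * Rabs (IZR k))) by lra. apply sqrt_le_1_alt.
    unfold b. rewrite <- (pow2_abs (IZR k)). nra. }
  rewrite Rmult_comm. apply Rmult_le_compat_r; [left; apply exp_pos | exact Hsqrt].
Qed.

Lemma Hs_sq_le_iff s a Y :
  Rbar_le (Hs_sq s a) (Finite Y) <-> l2sq_le (fun n => bracket s n * Cmod (a n)) Y.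
Proof.
  set (p := fun N => lsum (zrange N) (fun n => (bracket s n * Cmod (a n)) ^ 2)).
  assert (Hp : Hs_sq s a = Lim_seq p).
  { apply Lim_seq_ext. intros N. apply lsum_ext. intros n _.
    now rewrite Rpow_mult_distr, bracket_sq. }
  rewrite Hp. split.
  - intros H. apply l1_le_of_zrange; [intros; apply pow2_ge_0|]. intros N.
    assert (HpN : Rbar_le (Lim_seq (fun _ => p N)) (Lim_seq p)).
    { apply Lim_seq_le_loc. exists N. intros N' HN'.
      apply lsum_zrange_mono; [exact HN' | intros; apply pow2_ge_0]. }
    rewrite Lim_seq_const in HpN. exact (Rbar_le_trans _ _ _ HpN H).
  - intros H. rewrite <- (Lim_seq_const Y). apply Lim_seq_le_loc.
    exists O. intros N _. apply H, zrange_NoDup.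
Qed.

Lemma lsum_inv_sq_le N : lsum (zrange N) (fun k => / IZR k ^ 2) <= 4 - 4 / (INR N + 1).
Proof.
  induction N as [|N IH].
  - change (zrange 0) with [0%Z]. rewrite lsum_cons, lsum_nil. simpl. rewrite Rmult_0_l, Rinv_0. lra.
  - rewrite lsum_zrange_S, opp_IZR, <- INR_IZR_INZ, S_INR.
    set (t := INR N + 1) in *.
    assert (Ht : 1 <= t) by (pose proof (pos_INR N); unfold t; lra).
    assert (Htele : 2 / t ^ 2 <= 4 / t - 4 / (t + 1)).
    { apply Rmult_le_reg_r with (t ^ 2 * (t + 1)); [nra|].
      replace (2 / t ^ 2 * (t ^ 2 * (t + 1))) with (2 * (t + 1)) by (field; lra).
      replace ((4 / t - 4 / (t + 1)) * (t ^ 2 * (t + 1))) with (4 * t) by (field; lra). lra. }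
    replace (/ (- t) ^ 2) with (/ t ^ 2) by (f_equal; ring).
    unfold Rdiv at 1 in Htele. lra.
Qed.

Definition weighted_mod (s : R) (a : coeffs) (k : Z) : R := bracket s k * Cmod (a k).

(* At k = 0 this is 0, by the convention [/ 0 = 0]. *)
Definition antideriv_mod (a : coeffs) (k : Z) : R := Cmod (a k) / Rabs (IZR k).

Lemma weighted_mod_nonneg s a k : 0 <= weighted_mod s a k.
Proof. apply Rmult_le_pos; [left; apply bracket_pos | apply Cmod_ge_0]. Qed.

Lemma antideriv_mod_nonneg a k : 0 <= antideriv_mod a k.
Proof.
  unfold antideriv_mod, Rdiv. destruct (Z.eq_dec k 0) as [->|Hk].
  - rewrite Rabs_R0, Rinv_0, Rmult_0_r. lra.
  - apply Rmult_le_pos; [apply Cmod_ge_0 | left; apply Rinv_0_lt_compat, Rabs_pos_lt, not_0_IZR, Hk].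
Qed.

Lemma Cmod_antideriv_mod a k : k <> 0%Z -> Cmod (a k) = antideriv_mod a k * Rabs (IZR k).
Proof.
  intros Hk. unfold antideriv_mod. field. apply Rabs_no_R0, not_0_IZR, Hk.
Qed.

Lemma bracket_antideriv_mod_le r s a k : r <= s + 1 -> k <> 0%Z ->
  bracket r k * antideriv_mod a k <= 2 * weighted_mod s a k.
Proof.
  intros Hr Hk. unfold weighted_mod. rewrite (Cmod_antideriv_mod a k Hk).
  replace (2 * (bracket s k * (antideriv_mod a k * Rabs (IZR k))))
    with (2 * Rabs (IZR k) * bracket s k * antideriv_mod a k) by ring.
  apply Rmult_le_compat_r; [apply antideriv_mod_nonneg | apply bracket_le_abs_mul; auto].
Qed.

Lemma antideriv_mod_l1 s a M : 0 <= s -> 0 <= M -> l2sq_le (weighted_mod s a) (M ^ 2) ->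
  l1_le (antideriv_mod a) (2 * M).
Proof.
  intros Hs HM HF. apply l1_le_of_zrange; [apply antideriv_mod_nonneg|]. intros N.
  set (h := fun k => / (bracket s k * Rabs (IZR k))).
  assert (Hh : forall k, h k ^ 2 <= / IZR k ^ 2).
  { intros k. unfold h. destruct (Z.eq_dec k 0) as [->|Hk].
    - rewrite Rabs_R0, Rmult_0_r. simpl. rewrite Rmult_0_l, Rinv_0. lra.
    - assert (Hk1 : 1 <= Rabs (IZR k)) by (rewrite <- abs_IZR; apply IZR_le; lia).
      pose proof (bracket_ge_1 s k Hs).
      rewrite <- (pow2_abs (IZR k)), pow_inv. apply Rinv_le_contravar; [nra|].
      rewrite Rpow_mult_distr, <- (Rmult_1_l (Rabs (IZR k) ^ 2)) at 1.
      apply Rmult_le_compat_r; [apply pow2_ge_0 | nra]. }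
  rewrite (lsum_ext _ _ (fun k => weighted_mod s a k * h k)).
  2:{ intros k _. unfold weighted_mod, antideriv_mod, h. destruct (Z.eq_dec k 0) as [->|Hk].
      - rewrite Rabs_R0, Rmult_0_r, Rinv_0. unfold Rdiv. rewrite Rinv_0. ring.
      - assert (Habs := Rabs_no_R0 _ (not_0_IZR _ Hk)). pose proof (bracket_pos s k).
        field. lra. }
  assert (HCS := lsum_Cauchy_Schwarz (zrange N) (weighted_mod s a) h).
  assert (Hsum_h : lsum (zrange N) (fun k => h k ^ 2) <= 4).
  { eapply Rle_trans; [apply lsum_le; intros; apply Hh|].
    eapply Rle_trans; [apply lsum_inv_sq_le|].
    pose proof (pos_INR N). assert (0 <= 4 / (INR N + 1)) by (apply Rdiv_le_0_compat; lra). lra. }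
  assert (HFN := HF _ (zrange_NoDup N)).
  assert (Hpos : 0 <= lsum (zrange N) (fun k => h k ^ 2))
    by (apply lsum_nonneg; intros; apply pow2_ge_0).
  assert (0 <= lsum (zrange N) (fun k => weighted_mod s a k ^ 2))
    by (apply lsum_nonneg; intros; apply pow2_ge_0).
  nra.
Qed.

(** * The multipliers *)

Lemma Phi2_factor n1 n2 :
  Phi2 n1 n2 = (5 * n1 * n2 * (n1 + n2) * (n1 * n1 + n1 * n2 + n2 * n2))%Z.
Proof. unfold Phi2. ring. Qed.

Lemma B1_multiplier_le n n1 n2 : n = (n1 + n2)%Z -> n1 <> 0%Z -> n2 <> 0%Z ->
  Rabs (IZR (n * (n1 ^ 2 + n2 ^ 2)) / IZR (Phi2 n1 n2)) * (Rabs (IZR n1) * Rabs (IZR n2)) <= 1.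
Proof.
  intros -> H1 H2. rewrite Phi2_factor, !Z.pow_2_r, !mult_IZR, !plus_IZR, !mult_IZR.
  apply not_0_IZR in H1, H2. set (x := IZR n1) in *. set (y := IZR n2) in *.
  assert (HQ : 0 < x * x + x * y + y * y) by (pose proof (Rle_0_sqr (x + y)); unfold Rsqr in *; nra).
  destruct (Req_dec (x + y) 0) as [Hxy|Hxy].
  { rewrite Hxy, !Rmult_0_l. unfold Rdiv. rewrite Rmult_0_l, Rabs_R0. lra. }
  rewrite <- !Rabs_mult.
  replace ((x + y) * (x * x + y * y) / (5 * x * y * (x + y) * (x * x + x * y + y * y)) * (x * y))
    with ((x * x + y * y) / (5 * (x * x + x * y + y * y))) by (field; lra).
  rewrite Rabs_pos_eq by (apply Rdiv_le_0_compat; nra).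
  apply Rle_div_l; nra.
Qed.

Lemma B2_multiplier_le c0 n n1 n2 n3 m : 0 < c0 -> n = (n1 + m)%Z ->
  n1 <> 0%Z -> n2 <> 0%Z -> n3 <> 0%Z -> m <> 0%Z ->
  c0 * IZR (Z.max (Z.abs n1) (Z.max (Z.abs n2) (Z.abs n3))) ^ 4 <= IZR (Z.abs (Phi3 n1 n2 n3)) ->
  Rabs (IZR (n * (n1 ^ 2 + m ^ 2) * m * (n2 ^ 2 + n3 ^ 2))
          / (IZR (Phi2 n1 m) * IZR (Phi3 n1 n2 n3)))
    * (Rabs (IZR n1) * Rabs (IZR n2) * Rabs (IZR n3)) <= / c0.
Proof.
  intros Hc0 -> H1 H2 H3 Hm HP.
  set (X := IZR (Z.max (Z.abs n1) (Z.max (Z.abs n2) (Z.abs n3)))) in HP.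
  assert (HyX : Rabs (IZR n2) <= X) by (rewrite <- abs_IZR; apply IZR_le; lia).
  assert (HzX : Rabs (IZR n3) <= X) by (rewrite <- abs_IZR; apply IZR_le; lia).
  assert (Hy1 : 1 <= Rabs (IZR n2)) by (rewrite <- abs_IZR; apply IZR_le; lia).
  rewrite abs_IZR in HP. rewrite Phi2_factor, !Z.pow_2_r, !mult_IZR, !plus_IZR, !mult_IZR.
  apply not_0_IZR in H1, H2, H3, Hm.
  set (x := IZR n1) in *. set (y := IZR n2) in *. set (z := IZR n3) in *.
  set (v := IZR m) in *. set (P := IZR (Phi3 n1 n2 n3)) in *.
  assert (HX4 : 1 <= X ^ 4) by (apply pow_R1_Rle; lra).
  assert (HPpos : 0 < Rabs P) by nra.
  assert (HP0 : P <> 0) by (intros E; rewrite E, Rabs_R0 in HPpos; lra).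
  assert (HQ : 0 < x * x + x * v + v * v) by (pose proof (Rle_0_sqr (x + v)); unfold Rsqr in *; nra).
  destruct (Req_dec (x + v) 0) as [Hxv|Hxv].
  { rewrite Hxv, !Rmult_0_l. unfold Rdiv. rewrite Rmult_0_l, Rabs_R0, Rmult_0_l.
    now apply Rlt_le, Rinv_0_lt_compat. }
  rewrite <- !Rabs_mult.
  replace ((x + v) * (x * x + v * v) * v * (y * y + z * z)
             / (5 * x * v * (x + v) * (x * x + x * v + v * v) * P) * (x * y * z))
    with ((x * x + v * v) * ((y * y + z * z) * (y * z)) / (5 * (x * x + x * v + v * v) * P))
    by (field; repeat split; lra).
  rewrite Rabs_div, !Rabs_mult, (Rabs_pos_eq (x * x + v * v)), (Rabs_pos_eq (y * y + z * z)),
    (Rabs_pos_eq 5), (Rabs_pos_eq (x * x + x * v + v * v)) by nra.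
  apply Rle_div_l; [apply Rmult_lt_0_compat; lra|].
  assert (Hyz : (y * y + z * z) * (Rabs y * Rabs z) <= 2 * (Rabs P / c0)).
  { assert (Habs : forall r, r * r = Rabs r * Rabs r)
      by (intros r; rewrite <- Rabs_mult, Rabs_pos_eq; nra).
    rewrite (Habs y), (Habs z).
    assert (HXP : X ^ 4 <= Rabs P / c0).
    { replace (X ^ 4) with (c0 * X ^ 4 / c0) by (field; lra).
      apply Rmult_le_compat_r; [left; apply Rinv_0_lt_compat, Hc0 | exact HP]. }
    pose proof (Rabs_pos y). pose proof (Rabs_pos z).
    assert (Rabs y * Rabs y + Rabs z * Rabs z <= 2 * (X * X)) by nra.
    assert (Rabs y * Rabs z <= X * X) by nra.
    replace (X ^ 4) with ((X * X) * (X * X)) in HXP by ring.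
    apply Rle_trans with (2 * (X * X) * (X * X)); [apply Rmult_le_compat; nra | lra]. }
  assert (Hxv2 : x * x + v * v <= 2 * (x * x + x * v + v * v))
    by (pose proof (Rle_0_sqr (x + v)); unfold Rsqr in *; nra).
  assert (0 <= Rabs P / c0) by (apply Rdiv_le_0_compat; lra).
  unfold Rdiv in *. nra.
Qed.

(** * Bounds on B1 and B2 *)

Lemma Zneqb_true x y : Zneqb x y = true -> x <> y.
Proof. unfold Zneqb. rewrite negb_true_iff. apply Z.eqb_neq. Qed.

Lemma B1_term_weighted_le s r a n n1 : 0 <= r <= s + 1 ->
  bracket r n * Cmod (B1_term a n n1)
    <= 2 * Rpower 9 (r / 2) * (weighted_mod s a n1 * antideriv_mod a (n - n1)
                               + antideriv_mod a n1 * weighted_mod s a (n - n1)).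
Proof.
  intros Hr. set (C := Rpower 9 (r / 2)). set (n2 := (n - n1)%Z).
  assert (HC : 0 < C) by apply exp_pos.
  pose proof (weighted_mod_nonneg s a n1) as HF1. pose proof (weighted_mod_nonneg s a n2) as HF2.
  pose proof (antideriv_mod_nonneg a n1) as HG1. pose proof (antideriv_mod_nonneg a n2) as HG2.
  unfold B1_term. cbv zeta. fold n2.
  destruct (Zneqb n1 0 && Zneqb n2 0 && Zneqb n1 n && Zneqb n2 n) eqn:Hcond.
  2:{ rewrite Cmod_0, Rmult_0_r. apply Rmult_le_pos; [lra|]. nra. }
  repeat rewrite andb_true_iff in Hcond. destruct Hcond as [[[H1 H2] _] _].
  apply Zneqb_true in H1, H2.
  rewrite !Cmod_mult, Cmod_R, (Cmod_antideriv_mod a n1 H1), (Cmod_antideriv_mod a n2 H2).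
  assert (Hm := B1_multiplier_le n n1 n2 ltac:(unfold n2; ring) H1 H2).
  assert (Hw := bracket_add r n n1 n2 ltac:(lra) ltac:(unfold n2; ring)). fold C in Hw.
  assert (Hg1 := bracket_antideriv_mod_le r s a n1 ltac:(lra) H1).
  assert (Hg2 := bracket_antideriv_mod_le r s a n2 ltac:(lra) H2).
  set (G1 := antideriv_mod a n1) in *. set (G2 := antideriv_mod a n2) in *.
  set (c := IZR (n * (n1 ^ 2 + n2 ^ 2)) / IZR (Phi2 n1 n2)) in *.
  pose proof (bracket_pos r n).
  apply Rle_trans with (bracket r n * G1 * G2).
  { replace (bracket r n * (Rabs c * (G1 * Rabs (IZR n1)) * (G2 * Rabs (IZR n2))))
      with (bracket r n * G1 * G2 * (Rabs c * (Rabs (IZR n1) * Rabs (IZR n2)))) by ring.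
    rewrite <- (Rmult_1_r (bracket r n * G1 * G2)) at 2.
    apply Rmult_le_compat_l; [|exact Hm]. apply Rmult_le_pos; [|exact HG2]. nra. }
  apply Rle_trans with (C * (bracket r n1 + bracket r n2) * G1 * G2).
  { apply Rmult_le_compat_r; [exact HG2|]. apply Rmult_le_compat_r; [exact HG1 | exact Hw]. }
  replace (C * (bracket r n1 + bracket r n2) * G1 * G2)
    with (C * (bracket r n1 * G1 * G2 + G1 * (bracket r n2 * G2))) by ring.
  replace (2 * C * (weighted_mod s a n1 * G2 + G1 * weighted_mod s a n2))
    with (C * (2 * weighted_mod s a n1 * G2 + G1 * (2 * weighted_mod s a n2))) by ring.
  apply Rmult_le_compat_l; [lra|].
  apply Rplus_le_compat; [apply Rmult_le_compat_r | apply Rmult_le_compat_l]; assumption.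
Qed.

Lemma B2_term_weighted_le s r c0 a n n1 n2 : 0 <= r <= s + 1 -> 0 < c0 ->
  let n3 := (n - n1 - n2)%Z in
  bracket r n * Cmod (B2_term c0 a n n1 n2)
    <= 2 * Rpower 9 (r / 2) / c0
       * (weighted_mod s a n1 * (antideriv_mod a n2 * antideriv_mod a n3)
          + antideriv_mod a n1 * (weighted_mod s a n2 * antideriv_mod a n3)
          + antideriv_mod a n1 * (antideriv_mod a n2 * weighted_mod s a n3)).
Proof.
  intros Hr Hc0 n3. set (C := Rpower 9 (r / 2)).
  assert (HC : 0 < C) by apply exp_pos.
  pose proof (weighted_mod_nonneg s a n1) as HF1. pose proof (weighted_mod_nonneg s a n2) as HF2.
  pose proof (weighted_mod_nonneg s a n3) as HF3.
  pose proof (antideriv_mod_nonneg a n1) as HG1. pose proof (antideriv_mod_nonneg a n2) as HG2.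
  pose proof (antideriv_mod_nonneg a n3) as HG3.
  assert (HCc0 : 0 < C / c0) by (apply Rdiv_lt_0_compat; lra).
  unfold B2_term. cbv zeta. fold n3. set (m := (n2 + n3)%Z).
  match goal with |- context [if ?b then _ else _] => destruct b eqn:Hcond end.
  2:{ rewrite Cmod_0, Rmult_0_r. apply Rmult_le_pos; [apply Rdiv_le_0_compat; lra|].
      repeat first [assumption | apply Rplus_le_le_0_compat | apply Rmult_le_pos]. }
  repeat rewrite andb_true_iff in Hcond.
  destruct Hcond as [[[[[[[H1 H2] H3] _] _] _] Hm] HPhi3].
  destruct (Rle_dec _ _) as [HPhi3'|]; [clear HPhi3 | discriminate].
  apply Zneqb_true in H1, H2, H3, Hm.
  rewrite !Cmod_mult, Cmod_R, (Cmod_antideriv_mod a n1 H1), (Cmod_antideriv_mod a n2 H2),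
    (Cmod_antideriv_mod a n3 H3).
  assert (Hmult := B2_multiplier_le c0 n n1 n2 n3 m Hc0 ltac:(unfold m, n3; ring) H1 H2 H3 Hm HPhi3').
  assert (Hw := bracket_add3 r n n1 n2 n3 ltac:(lra) ltac:(unfold n3; ring)). fold C in Hw.
  assert (Hg1 := bracket_antideriv_mod_le r s a n1 ltac:(lra) H1).
  assert (Hg2 := bracket_antideriv_mod_le r s a n2 ltac:(lra) H2).
  assert (Hg3 := bracket_antideriv_mod_le r s a n3 ltac:(lra) H3).
  set (G1 := antideriv_mod a n1) in *. set (G2 := antideriv_mod a n2) in *.
  set (G3 := antideriv_mod a n3) in *.
  set (c := IZR (n * (n1 ^ 2 + m ^ 2) * m * (n2 ^ 2 + n3 ^ 2))
              / (IZR (Phi2 n1 m) * IZR (Phi3 n1 n2 n3))) in *.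
  pose proof (bracket_pos r n).
  assert (HG : 0 <= G1 * G2 * G3) by (apply Rmult_le_pos; [apply Rmult_le_pos|]; assumption).
  apply Rle_trans with (bracket r n * (G1 * G2 * G3) * / c0).
  { replace (bracket r n * (Rabs c * (G1 * Rabs (IZR n1)) * (G2 * Rabs (IZR n2)) * (G3 * Rabs (IZR n3))))
      with (bracket r n * (G1 * G2 * G3) * (Rabs c * (Rabs (IZR n1) * Rabs (IZR n2) * Rabs (IZR n3))))
      by ring.
    apply Rmult_le_compat_l; [nra | exact Hmult]. }
  apply Rle_trans with (C / c0 * ((bracket r n1 + bracket r n2 + bracket r n3) * (G1 * G2 * G3))).
  { replace (C / c0 * ((bracket r n1 + bracket r n2 + bracket r n3) * (G1 * G2 * G3)))
      with (C * (bracket r n1 + bracket r n2 + bracket r n3) * (G1 * G2 * G3) * / c0)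
      by (unfold Rdiv; ring).
    apply Rmult_le_compat_r; [left; apply Rinv_0_lt_compat, Hc0|].
    apply Rmult_le_compat_r; [exact HG | exact Hw]. }
  replace (2 * C / c0 * (weighted_mod s a n1 * (G2 * G3) + G1 * (weighted_mod s a n2 * G3)
                          + G1 * (G2 * weighted_mod s a n3)))
    with (C / c0 * (2 * weighted_mod s a n1 * (G2 * G3) + G1 * (2 * weighted_mod s a n2 * G3)
                    + G1 * G2 * (2 * weighted_mod s a n3))) by (unfold Rdiv; ring).
  replace ((bracket r n1 + bracket r n2 + bracket r n3) * (G1 * G2 * G3))
    with (bracket r n1 * G1 * (G2 * G3) + G1 * (bracket r n2 * G2 * G3) + G1 * G2 * (bracket r n3 * G3))
    by ring.
  apply Rmult_le_compat_l; [lra|].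
  assert (0 <= G2 * G3) by nra. assert (0 <= G1 * G2) by nra.
  repeat apply Rplus_le_compat;
    [apply Rmult_le_compat_r | apply Rmult_le_compat_l, Rmult_le_compat_r | apply Rmult_le_compat_l];
    assumption.
Qed.

Definition B1_abs (a : coeffs) (n : Z) (L : nat) : R :=
  lsum (zrange L) (fun n1 => Cmod (B1_term a n n1)).

Definition B2_abs (c0 : R) (a : coeffs) (n : Z) (L : nat) : R :=
  lsum (zrange L) (fun n1 => lsum (zrange L) (fun n2 => Cmod (B2_term c0 a n n1 n2))).

Lemma B1_abs_mono a n L : B1_abs a n L <= B1_abs a n (S L).
Proof. apply lsum_zrange_mono; [lia | intros; apply Cmod_ge_0]. Qed.

Lemma B2_abs_mono c0 a n L : B2_abs c0 a n L <= B2_abs c0 a n (S L).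
Proof.
  assert (Hin : forall n1 L', 0 <= lsum (zrange L') (fun n2 => Cmod (B2_term c0 a n n1 n2)))
    by (intros; apply lsum_nonneg; intros; apply Cmod_ge_0).
  eapply Rle_trans; [apply lsum_le; intros n1 _; apply lsum_zrange_mono; [| intros; apply Cmod_ge_0]|].
  - apply (le_S _ _ (le_n L)).
  - apply lsum_zrange_mono; [lia | intros; apply Hin].
Qed.

Lemma lsum_lsum_conv3 L F G n :
  lsum (zrange L) (fun n1 => lsum (zrange L) (fun n2 =>
    F n1 * (G n2 * G (n - n1 - n2)%Z) + G n1 * (F n2 * G (n - n1 - n2)%Z)
    + G n1 * (G n2 * F (n - n1 - n2)%Z)))
  = 2 * conv L G (conv L F G) n + conv L G (conv L G F) n.
Proof.
  unfold conv. rewrite (lsum_ext _ _ (fun n1 =>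
    lsum (zrange L) (fun n2 => F n1 * (G n2 * G (n - n1 - n2)%Z))
    + G n1 * lsum (zrange L) (fun n2 => F n2 * G (n - n1 - n2)%Z)
    + G n1 * lsum (zrange L) (fun n2 => G n2 * F (n - n1 - n2)%Z)))
    by (intros; now rewrite !lsum_plus, !lsum_scal).
  rewrite !lsum_plus, lsum_comm.
  rewrite (lsum_ext _ (fun n2 => lsum (zrange L) (fun n1 => F n1 * (G n2 * G (n - n1 - n2)%Z)))
                      (fun n2 => G n2 * lsum (zrange L) (fun n1 => F n1 * G (n - n2 - n1)%Z))).
  2:{ intros n2 _. rewrite <- lsum_scal. apply lsum_ext. intros n1 _.
      replace (n - n2 - n1)%Z with (n - n1 - n2)%Z by lia. ring. }
  ring.
Qed.

Lemma B1_abs_l2sq_le s r a A B L : 0 <= r <= s + 1 ->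
  l2sq_le (weighted_mod s a) A -> l1_le (antideriv_mod a) B ->
  l2sq_le (fun n => bracket r n * B1_abs a n L) (16 * Rpower 9 (r / 2) ^ 2 * (A * B ^ 2)).
Proof.
  intros Hr HF HG. set (C := Rpower 9 (r / 2)).
  set (F := weighted_mod s a) in *. set (G := antideriv_mod a) in *.
  apply (l2sq_le_mono _ (fun n => 2 * C * (conv L F G n + conv L G F n))).
  - intros n. split.
    + apply Rmult_le_pos; [left; apply bracket_pos | apply lsum_nonneg; intros; apply Cmod_ge_0].
    + unfold B1_abs, conv. rewrite <- lsum_plus, <- !lsum_scal.
      apply lsum_le. intros n1 _. apply B1_term_weighted_le, Hr.
  - assert (HG0 : forall k, 0 <= G k) by apply antideriv_mod_nonneg.
    eapply l2sq_le_weaken; [|apply l2sq_le_scal, l2sq_le_plus;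
      [apply (l2sq_le_conv_l L F G A B) | apply (l2sq_le_conv_r L F G A B)]; assumption].
    right. ring.
Qed.

Lemma B2_abs_l2sq_le s r c0 a A B L : 0 <= r <= s + 1 -> 0 < c0 ->
  l2sq_le (weighted_mod s a) A -> l1_le (antideriv_mod a) B ->
  l2sq_le (fun n => bracket r n * B2_abs c0 a n L) (40 * (Rpower 9 (r / 2) / c0) ^ 2 * (A * B ^ 4)).
Proof.
  intros Hr Hc0 HF HG. set (C := Rpower 9 (r / 2)).
  set (F := weighted_mod s a) in *. set (G := antideriv_mod a) in *.
  assert (HG0 : forall k, 0 <= G k) by apply antideriv_mod_nonneg.
  apply (l2sq_le_mono _ (fun n => 2 * C / c0 * (2 * conv L G (conv L F G) n + conv L G (conv L G F) n))).
  - intros n. split.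
    + apply Rmult_le_pos; [left; apply bracket_pos|].
      apply lsum_nonneg. intros. apply lsum_nonneg. intros. apply Cmod_ge_0.
    + unfold B2_abs. rewrite <- lsum_lsum_conv3, <- !lsum_scal.
      apply lsum_le. intros n1 _. rewrite <- !lsum_scal.
      apply lsum_le. intros n2 _. apply B2_term_weighted_le; assumption.
  - assert (HFG := l2sq_le_conv_l L F G A B HG0 HF HG).
    assert (HGF := l2sq_le_conv_r L F G A B HG0 HF HG).
    assert (HGFG := l2sq_le_conv_r L _ G _ B HG0 HFG HG).
    assert (HGGF := l2sq_le_conv_r L _ G _ B HG0 HGF HG).
    eapply l2sq_le_weaken;
      [|apply l2sq_le_scal, l2sq_le_plus; [apply l2sq_le_scal, HGFG | apply HGGF]].
    right. unfold Rdiv. ring.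
Qed.

Lemma Cmod_zsumC_le L f : Cmod (zsumC L f) <= lsum (zrange L) (fun k => Cmod (f k)).
Proof.
  unfold zsumC. induction (zrange L) as [|k l IH]; simpl fold_right.
  - rewrite Cmod_0, lsum_nil. lra.
  - rewrite lsum_cons. eapply Rle_trans; [apply Cmod_triangle | lra].
Qed.

Lemma scaled_Cmod_limC_le w (S : nat -> C) T X : 0 < w ->
  (forall L, Cmod (S L) <= T L) -> (forall L, w * T L <= X) -> w * Cmod (limC S) <= 2 * X.
Proof.
  intros Hw HST HT.
  assert (H := Cmod_limC_le S (X / w)).
  replace (2 * X) with (w * (2 * (X / w))) by (field; lra).
  apply Rmult_le_compat_l; [lra|]. apply H. intros L.
  eapply Rle_trans; [apply HST|]. apply Rle_div_r; [exact Hw|]. rewrite Rmult_comm. apply HT.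
Qed.

Lemma B1hat_weighted_le r a n X : (forall L, bracket r n * B1_abs a n L <= X) ->
  bracket r n * Cmod (B1hat a n) <= 2 * X.
Proof.
  intros H. unfold B1hat. destruct (n =? 0)%Z.
  - rewrite Cmod_0, Rmult_0_r. enough (0 <= X) by lra. eapply Rle_trans; [|apply (H O)].
    apply Rmult_le_pos; [left; apply bracket_pos | apply lsum_nonneg; intros; apply Cmod_ge_0].
  - apply (scaled_Cmod_limC_le _ _ (B1_abs a n));
      [apply bracket_pos | intros; apply Cmod_zsumC_le | exact H].
Qed.

Lemma B2hat_weighted_le r c0 a n X : (forall L, bracket r n * B2_abs c0 a n L <= X) ->
  bracket r n * Cmod (B2hat c0 a n) <= 2 * X.
Proof.
  intros H. unfold B2hat. destruct (n =? 0)%Z.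
  - rewrite Cmod_0, Rmult_0_r. enough (0 <= X) by lra. eapply Rle_trans; [|apply (H O)].
    apply Rmult_le_pos; [left; apply bracket_pos|].
    apply lsum_nonneg. intros. apply lsum_nonneg. intros. apply Cmod_ge_0.
  - apply (scaled_Cmod_limC_le _ _ (B2_abs c0 a n)); [apply bracket_pos | | exact H].
    intros L. eapply Rle_trans; [apply Cmod_zsumC_le|].
    apply lsum_le. intros n1 _. apply Cmod_zsumC_le.
Qed.

Lemma B1hat_l2sq_le s r a A B : 0 <= r <= s + 1 ->
  l2sq_le (weighted_mod s a) A -> l1_le (antideriv_mod a) B ->
  l2sq_le (fun n => bracket r n * Cmod (B1hat a n)) (64 * Rpower 9 (r / 2) ^ 2 * (A * B ^ 2)).
Proof.
  intros Hr HF HG.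
  destruct (l2sq_le_Lim_seq (fun n L => bracket r n * B1_abs a n L) _
              (fun n L => Rmult_le_compat_l _ _ _ (Rlt_le _ _ (bracket_pos r n)) (B1_abs_mono a n L))
              (fun L => B1_abs_l2sq_le s r a A B L Hr HF HG)) as [HX HL].
  apply (l2sq_le_mono _ (fun n => 2 * real (Lim_seq (fun L => bracket r n * B1_abs a n L)))).
  - intros n. split; [apply Rmult_le_pos; [left; apply bracket_pos | apply Cmod_ge_0]|].
    apply B1hat_weighted_le, HX.
  - eapply l2sq_le_weaken; [|apply l2sq_le_scal, HL]. right. ring.
Qed.

Lemma B2hat_l2sq_le s r c0 a A B : 0 <= r <= s + 1 -> 0 < c0 ->
  l2sq_le (weighted_mod s a) A -> l1_le (antideriv_mod a) B ->
  l2sq_le (fun n => bracket r n * Cmod (B2hat c0 a n)) (160 * (Rpower 9 (r / 2) / c0) ^ 2 * (A * B ^ 4)).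
Proof.
  intros Hr Hc0 HF HG.
  destruct (l2sq_le_Lim_seq (fun n L => bracket r n * B2_abs c0 a n L) _
              (fun n L => Rmult_le_compat_l _ _ _ (Rlt_le _ _ (bracket_pos r n)) (B2_abs_mono c0 a n L))
              (fun L => B2_abs_l2sq_le s r c0 a A B L Hr Hc0 HF HG)) as [HX HL].
  apply (l2sq_le_mono _ (fun n => 2 * real (Lim_seq (fun L => bracket r n * B2_abs c0 a n L)))).
  - intros n. split; [apply Rmult_le_pos; [left; apply bracket_pos | apply Cmod_ge_0]|].
    apply B2hat_weighted_le, HX.
  - eapply l2sq_le_weaken; [|apply l2sq_le_scal, HL]. right. ring.
Qed.

Theorem lemma5p2 :
  forall (s eps c0 : R), 1 / 2 < s -> 0 <= eps < 1 -> 0 < c0 ->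
  exists K : R, 0 < K /\
    forall (I : R -> Prop) (u : R -> coeffs) (M : R),
      (forall t, I t -> real_meanzero (u t)) ->
      continuous_Hs s I u ->
      0 <= M ->
      (forall t, I t -> Rbar_le (Hs_sq s (u t)) (Finite (M ^ 2))) ->
      forall t, I t ->
        Rbar_le (Hs_sq (s + eps) (fun n => Cplus (B1hat (u t) n) (B2hat c0 (u t) n)))
                (Finite ((K * (M ^ 2 + M ^ 3)) ^ 2)).
Proof.
  intros s eps c0 Hs Heps Hc0.
  set (C := Rpower 9 ((s + eps) / 2)). set (D := C / c0).
  assert (HC : 0 < C) by apply exp_pos.
  assert (HD : 0 < D) by (apply Rdiv_lt_0_compat; lra).
  exists (100 * (C + D)). split; [lra|].
  intros I u M _ _ HM Hu t It.
  assert (HF := proj1 (Hs_sq_le_iff s (u t) _) (Hu t It)).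
  assert (HG := antideriv_mod_l1 s (u t) M ltac:(lra) HM HF).
  apply Hs_sq_le_iff, (l2sq_le_mono _ (fun n => bracket (s + eps) n * Cmod (B1hat (u t) n)
                                               + bracket (s + eps) n * Cmod (B2hat c0 (u t) n))).
  - intros n. pose proof (bracket_pos (s + eps) n). split.
    + apply Rmult_le_pos; [lra | apply Cmod_ge_0].
    + rewrite <- Rmult_plus_distr_l. apply Rmult_le_compat_l; [lra | apply Cmod_triangle].
  - eapply l2sq_le_weaken; [|apply l2sq_le_plus;
      [apply (B1hat_l2sq_le s) | apply (B2hat_l2sq_le s)]; eauto; lra].
    fold C D. pose proof (pow_le M 2 HM). pose proof (pow_le M 3 HM).
    assert (Hx : 0 <= C * M ^ 2) by nra. assert (Hy : 0 <= D * M ^ 3) by nra.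
    replace (2 * (64 * C ^ 2 * (M ^ 2 * (2 * M) ^ 2) + 160 * D ^ 2 * (M ^ 2 * (2 * M) ^ 4)))
      with (512 * (C * M ^ 2) ^ 2 + 5120 * (D * M ^ 3) ^ 2) by ring.
    apply Rle_trans with ((100 * (C * M ^ 2 + D * M ^ 3)) ^ 2); [nra|].
    apply pow_incr. nra.
Qed.
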